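(* In the setting described in the context, suppose there is exactly one buffer pool ($L=1$). Then $M=e'$ and $G=(\lambda^* )'$, and moreover $M\eta q=\eta$ and $MC\,\mathrm{diag}(x^* )A'=e'$.
   Context: Let $I\ge1$, $J\ge I$; each activity $j\in\{1,\dots,J\}$ has a server $s(j)$ and a buffer $b(j)$ in $\{1,\dots,I\}$, with $s(j)=b(j)=j$ for $j\le I$. Let $A_{ij}=\mathbf1\{s(j)=i\}$, $C_{ij}=\mathbf1\{b(j)=i\}$, $\lambda^*\in(0,\infty)^I$, $\mu_j^*=\lambda^*_{s(j)}$, $R_{ij}=\mu_j^*C_{ij}$, $\eta>0$, $q\in(0,1)^I$ with $\sum q_i=1$, $\nu=\eta q$; assume there is a unique $x^*\in\mathbb{R}^J$ with $x^*_j=\min\{\lambda^*_j,\nu_j\}$ for $j\le I$, $Rx^*=\nu$, $Ax^*=e$, $x^*\ge0$. Activity $j$ is basic if $x_j^*>0$. Buffers $i,i'$ communicate directly if there are basic $j,j'$ with $b(j)=i$, $b(j')=i'$, $s(j)=s(j')$; they communicate if linked by a finite chain of directly communicating buffers; the equivalence classes are the buffer pools $\mathcal P_1,\dots,\mathcal P_L$. The server pools are $\mathcal S_l=\{k:\exists\text{ basic } j\text{ with } s(j)=k,\ b(j)\in\mathcal P_l\}$. $M$ is the $L\times I$ matrix $M_{li}=\mathbf 1\{i\in\mathcal P_l\}$, $G$ the $L\times I$ matrix $G_{lk}=\lambda^*_k\mathbf1\{k\in\mathcal S_l\}$, $e$ a vector of ones of appropriate dimension, and $\mathrm{diag}(x^*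 )$ the $J\times J$ diagonal matrix with diagonal $x^*$. *)

From HB Require Import structures.
From mathcomp Require Import all_boot all_order all_algebra.
Set Implicit Arguments. Unset Strict Implicit. Unset Printing Implicit Defensive.
Import Order.TTheory GRing.Theory Num.Theory.
Local Open Scope ring_scope.

Section Network.
Variables (R : realFieldType) (I J : nat).
Variables (s b : 'I_J -> 'I_I).

Definition Amx : 'M[R]_(I, J) := \matrix_(i, j) (s j == i)%:R.
Definition Cmx : 'M[R]_(I, J) := \matrix_(i, j) (b j == i)%:R.
Definition mu (lam : 'cV[R]_I) (j : 'I_J) : R := lam (s j) 0.
Definition Rmx (lam : 'cV[R]_I) : 'M[R]_(I, J) :=
  \matrix_(i, j) (mu lam j * Cmx i j).
Definition nu (eta : R) (q : 'cV[R]_I) : 'cV[R]_I := eta *: q.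

Definition feasible (lam : 'cV[R]_I) (eta : R) (q : 'cV[R]_I) (y : 'cV[R]_J) :=
  [/\ (forall (i : 'I_I) (j : 'I_J), val j = val i ->
          y j 0 = Num.min (lam i 0) (nu eta q i 0)),
      Rmx lam *m y = nu eta q,
      Amx *m y = const_mx 1
    & forall j, 0 <= y j 0].

Variable x : 'cV[R]_J.

Definition basic (j : 'I_J) : bool := 0 < x j 0.

Definition dcomm : rel 'I_I := fun i i' =>
  [exists j : 'I_J, exists j' : 'I_J,
     [&& basic j, basic j', b j == i, b j' == i' & s j == s j']].

Definition comm : rel 'I_I := connect dcomm.

Definition pools : {set {set 'I_I}} := [set [set i' | comm i i'] | i : 'I_I].

Definition L : nat := #|pools|.
Definition pool (l : 'I_L) : {set 'I_I} := enum_val l.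

Definition server_pool (l : 'I_L) : {set 'I_I} :=
  [set k | [exists j : 'I_J, [&& basic j, s j == k & b j \in pool l]]].

Definition Mmx : 'M[R]_(L, I) := \matrix_(l, i) (i \in pool l)%:R.
Definition Gmx (lam : 'cV[R]_I) : 'M[R]_(L, I) :=
  \matrix_(l, k) (lam k 0 * (k \in server_pool l)%:R).

End Network.

From HB Require Import structures.
From mathcomp Require Import all_boot all_order all_algebra.
Import Order.TTheory GRing.Theory Num.Theory.
Local Open Scope ring_scope.

(* With a single buffer pool every buffer lies in it, so M is the all-ones
   row.  Every server lies in the server pool too: [A x = e] forces each
   server k to carry positive load, hence a basic activity served by k, and
   that activity's buffer is in the (only) pool.  The remaining identities are
   matrix computations: the columns of C and the entries of q sum to one, and
   [e' C diag(x) A' = e' (A x)' = e' e']. *)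

Section AllOnesRow.
Variables (R : pzRingType) (m n : nat).

Lemma mul_const1_col (v : 'cV[R]_n) :
  (const_mx 1 : 'M_(m, n)) *m v = const_mx (\sum_i v i 0).
Proof.
apply/matrixP => l k; rewrite !mxE (ord1 k).
by apply: eq_bigr => i _; rewrite mxE mul1r.
Qed.

Lemma mul_const1_diag (d : 'rV[R]_n) :
  (const_mx 1 : 'M_(m, n)) *m diag_mx d = (const_mx 1 : 'M_(m, 1)) *m d.
Proof.
by apply/matrixP => l j; rewrite mul_mx_diag !mxE big_ord1 !mxE.
Qed.

End AllOnesRow.

Section Network.
Variables (R : realFieldType) (I J : nat) (s b : 'I_J -> 'I_I) (x : 'cV[R]_J).

Lemma sum_col_Cmx (j : 'I_J) : \sum_i Cmx R b i j = 1.
Proof.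
rewrite (bigD1 (b j)) //= big1 ?addr0; first by rewrite mxE eqxx.
by move=> i ne_i; rewrite mxE eq_sym (negbTE ne_i).
Qed.

Lemma mul_const1_Cmx m : (const_mx 1 : 'M_(m, I)) *m Cmx R b = const_mx 1.
Proof.
apply/matrixP => l j; rewrite !mxE -[RHS](sum_col_Cmx j).
by apply: eq_bigr => i _; rewrite mxE mul1r.
Qed.

Lemma mem_pool_L1 (l : 'I_(L s b x)) (i : 'I_I) :
  L s b x = 1%N -> i \in pool l.
Proof.
move=> /eqP /cards1P [P pools1].
have class_i : [set i' | comm s b x i i'] = P.
  by apply/set1P; rewrite -pools1; apply/imsetP; exists i.
have /set1P -> : pool l \in [set P] by rewrite -pools1 enum_valP.
by rewrite -class_i inE; apply: connect0.
Qed.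

Lemma Mmx_L1 : L s b x = 1%N -> Mmx s b x = const_mx 1.
Proof. by move=> L1; apply/matrixP => l i; rewrite !mxE mem_pool_L1. Qed.

Lemma exists_basic_server (k : 'I_I) :
  Amx R s *m x = const_mx 1 -> exists2 j, basic x j & s j = k.
Proof.
move=> /matrixP /(_ k 0); rewrite !mxE => load_k.
have [/existsP [j /andP [basic_j /eqP s_j]] | /existsPn no_basic] :=
  boolP [exists j, basic x j && (s j == k)]; first by exists j.
suff : 1 <= 0 :> R by rewrite ler10.
rewrite -load_k; apply: sumr_le0 => j _; rewrite mxE.
have := no_basic j; rewrite negb_and /basic -leNgt.
by case: eqP => _ /=; [rewrite orbF mul1r | rewrite mul0r].
Qed.

Lemma server_pool_L1 (l : 'I_(L s b x)) (k : 'I_I) :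
  L s b x = 1%N -> Amx R s *m x = const_mx 1 -> k \in server_pool l.
Proof.
move=> L1 /(exists_basic_server k) [j basic_j s_j].
by rewrite inE; apply/existsP; exists j; rewrite basic_j s_j eqxx mem_pool_L1.
Qed.

End Network.

Theorem lemma4 (R : realFieldType) (I J : nat) (s b : 'I_J -> 'I_I)
  (lam : 'cV[R]_I) (eta : R) (q : 'cV[R]_I) (x : 'cV[R]_J) :
  (1 <= I)%N -> (I <= J)%N ->
  (forall (i : 'I_I) (j : 'I_J), val j = val i -> s j = i /\ b j = i) ->
  (forall i, 0 < lam i 0) ->
  0 < eta ->
  (forall i, 0 < q i 0 /\ q i 0 < 1) ->
  \sum_(i < I) q i 0 = 1 ->
  feasible s b lam eta q x ->
  (forall y, feasible s b lam eta q y -> y = x) ->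
  L s b x = 1%N ->
  [/\ Mmx s b x = const_mx 1,
      Gmx s b x lam = \matrix_(l, k) lam k 0,
      Mmx s b x *m (eta *: q) = const_mx eta
    & Mmx s b x *m Cmx R b *m diag_mx (\row_j x j 0) *m (Amx R s)^T
        = const_mx 1].
Proof.
move=> _ _ _ _ _ _ sum_q [_ _ Ax _] _ L1.
rewrite Mmx_L1 //; split=> //.
- apply/matrixP => l k; rewrite !mxE.
  by rewrite server_pool_L1 // mulr1.
- rewrite mul_const1_col; congr const_mx.
  by under eq_bigr => i _ do rewrite mxE; rewrite -mulr_sumr sum_q mulr1.
- have -> : \row_j x j 0 = x^T by apply/matrixP => i j; rewrite !mxE (ord1 i).
  rewrite mul_const1_Cmx mul_const1_diag -!mulmxA -trmx_mul Ax.
  by rewrite trmx_const; apply/matrixP => l k; rewrite !mxE big_ord1 !mxE mulr1.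
Qed.
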